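(* For every $m\ge 1$, the Zimin word $Z_m$ is minimal for the ai-semiring $\mathcal{B}_2^1$; that is, if $w$ is a word such that $\mathcal{B}_2^1$ satisfies the identity $w+Z_m=Z_m$, then $w=Z_m$.
   Context: Words are finite nonempty sequences of variables from a countably infinite set. Zimin words are defined by $Z_1=x_1$, $Z_{m+1}=Z_m x_{m+1} Z_m$ with distinct variables $x_1,x_2,\dots$. $B_2^1$ is the six-element monoid with zero $\{1,c,d,cd,dc,0\}$ presented as $\langle c,d\mid cdc=c,\ dcd=d,\ c^2=d^2=0\rangle$. $\mathcal{B}_2^1$ is the ai-semiring $(B_2^1,+,\cdot)$ where $+$ is the join for the partial order in which $0$ is the greatest element, $c,d,cd,dc$ are pairwise incomparable and all lie below $0$, $1<cd$, $1<dc$, and there are no other relations (so $c,d,1$ are minimal elements). An identity $p\leqslant p'$ means $p+p'=p'$; an identity holds in an ai-semiring if it holds under every substitution of elements for variables (words evaluated as products). *)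

From mathcomp Require Import all_boot.
Set Implicit Arguments. Unset Strict Implicit. Unset Printing Implicit Defensive.

(* The six elements of B_2^1 = <c,d | cdc=c, dcd=d, c^2=d^2=0> with 1 adjoined. *)
Inductive B21 := One | Cc | Dd | CD | DC | Zero.

Definition b_mul (x y : B21) : B21 :=
  match x, y with
  | One, _ => y
  | _, One => x
  | Zero, _ => Zero
  | _, Zero => Zero
  | Cc, Cc => Zero | Cc, Dd => CD | Cc, CD => Zero | Cc, DC => Cc
  | Dd, Cc => DC | Dd, Dd => Zero | Dd, CD => Dd | Dd, DC => Zero
  | CD, Cc => Cc | CD, Dd => Zero | CD, CD => CD | CD, DC => Zero
  | DC, Cc => Zero | DC, Dd => Dd | DC, CD => Zero | DC, DC => DC
  end.

(* Addition of the ai-semiring: join for the order with 0 on top,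
   c, d, cd, dc pairwise incomparable, 1 < cd, 1 < dc. *)
Definition b_add (x y : B21) : B21 :=
  match x, y with
  | One, One => One | Cc, Cc => Cc | Dd, Dd => Dd | CD, CD => CD | DC, DC => DC
  | One, CD => CD | CD, One => CD
  | One, DC => DC | DC, One => DC
  | _, _ => Zero
  end.

(* Words: nonempty sequences of variables; variables are natural numbers
   (x_i is represented by i). *)
Definition word := seq nat.

Definition b_eval (phi : nat -> B21) (w : word) : B21 :=
  foldr (fun x acc => b_mul (phi x) acc) One w.

Definition satisfies_le (p p' : word) : Prop :=
  forall phi : nat -> B21, b_add (b_eval phi p) (b_eval phi p') = b_eval phi p'.

Fixpoint zimin (m : nat) : word :=
  match m with
  | 0 => [::]
  | k.+1 => zimin k ++ k.+1 :: zimin k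
  end.

(* Substitute c for the letter x_1 of Z_m, d for its other letters and 0 for
   everything else.  Z_m = x_1 u_1 x_1 u_2 ... x_1 then evaluates to
   c(dc)^n = c, so w + c = c forces w to evaluate to c; but the only products
   of c, d and 0 equal to c are the alternating words c(dc)^n, so
   w = x_1 v_1 x_1 ... v_n x_1 with every v_i a letter of Z_m other than x_1.
   Substituting 1 for x_1 erases it from both sides and leaves the identity
   v_1 ... v_n <= Z_(m-1) on the letters x_2, ..., x_m, so w = Z_m by
   induction on m. *)
From mathcomp Require Import all_boot.
From HB Require Import structures.
From mathcomp Require Import zify.

Set Implicit Arguments.
Unset Strict Implicit.
Unset Printing Implicit Defensive.

Scheme Equality for B21.
HB.instance Definition _ := comparableMixin B21_eq_dec.

Fixpoint interleave (T : Type) (k : T) (s : seq T) : seq T :=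
  if s is a :: s' then k :: a :: interleave k s' else [:: k].

Lemma interleave_cat (T : Type) (k : T) u a v :
  interleave k (u ++ a :: v) = interleave k u ++ a :: interleave k v.
Proof. by elim: u => [|x u IHu] //=; rewrite IHu. Qed.

Lemma map_eq_interleave (T U : Type) (f : T -> U) k a t w :
  (forall x, f x = a -> x = k) -> map f w = interleave a t ->
  exists2 w', w = interleave k w' & map f w' = t.
Proof.
move=> f_inj_a; elim: t w => [|b t IHt] [|x [|y w]] //= [/f_inj_a ->].
- by exists [::].
- by move=> <- /IHt [w' -> <-]; exists (y :: w').
Qed.

Lemma map_interleave (T U : Type) (f : T -> U) k s :
  map f (interleave k s) = interleave (f k) (map f s).
Proof. by elim: s => [|a s IHs] //=; rewrite IHs. Qed.

Lemma mem_interleave (T : eqType) (k x : T) s :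
  (x \in interleave k s) = (x == k) || (x \in s).
Proof.
elim: s => [|a s IHs] /=; first by rewrite inE orbF.
by rewrite !inE IHs; case: (x == k).
Qed.

Definition b_prod (s : seq B21) : B21 := foldr b_mul One s.

Lemma b_evalE phi w : b_eval phi w = b_prod (map phi w).
Proof. by rewrite /b_prod foldr_map. Qed.

Definition cdz (a : B21) : bool := a \in [:: Cc; Dd; Zero].

Lemma b_prod_interleave_c t : all (pred1 Dd) t -> b_prod (interleave Cc t) = Cc.
Proof. by elim: t => [|a t IHt] //= /andP [/eqP -> /IHt ->]. Qed.

Lemma b_prod_eq1 s : all cdz s -> b_prod s = One -> s = [::].
Proof.
by case: s => [|a s] //= /andP []; rewrite /b_prod /=; case: a; case: (foldr _ _ _).
Qed.

Lemma b_prod_eq_c s : all cdz s -> b_prod s = Cc ->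
  exists2 t, s = interleave Cc t & all (pred1 Dd) t.
Proof.
move=> s_cdz.
suff [] : (b_prod s = Cc -> exists2 t, s = interleave Cc t & all (pred1 Dd) t)
  /\ (b_prod s = DC -> exists2 t, s = Dd :: interleave Cc t & all (pred1 Dd) t)
  by [].
elim: s s_cdz => [|a s IHs] //= /andP [a_cdz s_cdz].
have [IHc IHdc] := IHs s_cdz.
case: a a_cdz => // _; case Es: (b_prod s) => //; split=> // _.
- by rewrite (b_prod_eq1 s_cdz Es); exists [::].
- by have [t -> t_d] := IHdc Es; exists (Dd :: t).
- by have [t -> t_d] := IHc Es; exists t.
Qed.

Lemma b_add_eq_c a : b_add a Cc = Cc -> a = Cc.
Proof. by case: a. Qed.

Lemma satisfies_le_interleave k u v : k \notin u -> k \notin v ->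
  satisfies_le (interleave k u) (interleave k v) -> satisfies_le u v.
Proof.
have eval_drop phi s : k \notin s ->
    b_eval (fun x => if x == k then One else phi x) (interleave k s) = b_eval phi s.
  elim: s => [|a s IHs] /=; first by rewrite eqxx.
  by rewrite inE negb_or eq_sym eqxx => /andP [/negbTE -> /IHs ->].
by move=> ku kv uv phi; rewrite -(eval_drop phi u) // -(eval_drop phi v).
Qed.

(* Z_m on the letters x_k, ..., x_(k+m-1), unfolded along its letter x_k,
   which occupies every other position. *)
Fixpoint zimin_from (k m : nat) : word :=
  if m is m'.+1 then interleave k (zimin_from k.+1 m') else [::].

Lemma zimin_fromS k m :
  zimin_from k m.+1 = zimin_from k m ++ (k + m) :: zimin_from k m.
Proof.
elim: m k => [|m IHm] k; first by rewrite addn0.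
rewrite -[zimin_from k m.+2]/(interleave k (zimin_from k.+1 m.+1)) IHm.
by rewrite interleave_cat addSnnS.
Qed.

Lemma zimin_from1 m : zimin m = zimin_from 1 m.
Proof. by elim: m => [|m IHm] //; rewrite zimin_fromS -IHm add1n. Qed.

Lemma mem_zimin_from k m x : x \in zimin_from k m -> k <= x < k + m.
Proof.
elim: m k => [|m IHm] k //=.
by rewrite mem_interleave => /orP [/eqP -> | /IHm]; lia.
Qed.

Lemma satisfies_le_zimin_from_shape k m w : satisfies_le w (zimin_from k m.+1) ->
  exists2 w', w = interleave k w' & all (fun x => k < x < k + m.+1) w'.
Proof.
pose phi (x : nat) := if x == k then Cc else if k < x < k + m.+1 then Dd else Zero.
have phi_cdz x : cdz (phi x) by rewrite /phi; case: (x == k) => //; case: (_ && _).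
have phi_c x : phi x = Cc -> x = k by rewrite /phi; case: eqP => //; case: (_ && _).
have phi_d x : (phi x == Dd) = (k < x < k + m.+1).
  by rewrite /phi; case: (x =P k) => [->|_]; [rewrite ltnn | case: (_ && _)].
have zimin_c : b_eval phi (zimin_from k m.+1) = Cc.
  rewrite b_evalE map_interleave {1}/phi eqxx b_prod_interleave_c // all_map.
  by apply/allP => x /mem_zimin_from x_range /=; rewrite phi_d; lia.
move=> /(_ phi); rewrite zimin_c b_evalE => /b_add_eq_c.
have phiw_cdz : all cdz (map phi w).
  by rewrite all_map; apply/allP => x _; apply: phi_cdz.
move=> /(b_prod_eq_c phiw_cdz) [t /(map_eq_interleave phi_c) [w' -> <-]].
rewrite all_map => w'_d; exists w' => //.
by apply: sub_all w'_d => x /=; rewrite phi_d.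
Qed.

Lemma zimin_from_minimal m k w :
  satisfies_le w (zimin_from k m.+1) -> w = zimin_from k m.+1.
Proof.
elim: m k w => [|m IHm] k w w_le;
  have [w' w_def w'_range] := satisfies_le_zimin_from_shape w_le.
  by case: w' w_def w'_range => [|x w'] -> //= /andP []; lia.
have k_w' : k \notin w' by apply/negP => /(allP w'_range); lia.
have k_zimin : k \notin zimin_from k.+1 m.+1 by apply/negP => /mem_zimin_from; lia.
rewrite -[zimin_from k m.+2]/(interleave k (zimin_from k.+1 m.+1)) w_def in w_le *.
by rewrite (IHm _ _ (satisfies_le_interleave k_w' k_zimin w_le)).
Qed.

Theorem lemma3p7 (m : nat) (w : word) :
  1 <= m -> w <> [::] -> satisfies_le w (zimin m) -> w = zimin m.
Proof.
case: m => [|m] // _ _; rewrite zimin_from1; exact: zimin_from_minimal.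
Qed.
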